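(* The subvariety $\mathcal S\subseteq\mathscr X_2$ is a rational section for the action of $G=\mathrm{SO}_3(\mathbb C)\times\mathrm{SO}_3(\mathbb C)$ on $\mathscr X_2$.
   Context: Two-qubit setting in coordinates: identify $V_1=V_2=\mathbb C^2$ and use the Pauli matrices $\sigma_1=\begin{pmatrix}0&1\\1&0\end{pmatrix}$, $\sigma_2=\begin{pmatrix}0&-i\\i&0\end{pmatrix}$, $\sigma_3=\begin{pmatrix}1&0\\0&-1\end{pmatrix}$. Every trace-one endomorphism $\rho$ of $\mathbb C^2\otimes\mathbb C^2$ (L-state) is uniquely $\rho=\tfrac14\big(I\otimes I+\sum_a v_a\sigma_a\otimes I+\sum_b w_bI\otimes\sigma_b+\sum_{a,b}C_{ba}\sigma_a\otimes\sigma_b\big)$, giving coordinates $(v,w,C)\in\mathbb C^3\times\mathbb C^3\times M_3(\mathbb C)$ on the space $\mathscr L_2$ of L-states. The group $G=\mathrm{SO}_3(\mathbb C)\times\mathrm{SO}_3(\mathbb C)$ ($\cong\mathrm{PGL}_2(\mathbb C)^2$ acting by conjugation) acts by $(g_1,g_2)\cdot(v,w,C)=(g_1v,g_2w,g_2Cg_1^{-1})$. Let $X_0\subseteq\mathscr L_2$ be the linear subspace of $(v,w,C)$ with $v_1=v_2=w_1=w_2=0$ and $C_{ba}=0$ whenever exactly one of $a,b$ equals $3$. The variety of X-states $\mathscr X_2$ is the Zariski closure of $G\cdot X_0$ with reduced structure (equivalently, the Zariski closure of the set of X-states: L-states that, for some choice of bases of the two qubits, are block-diagonal with respect to the even/odd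 parity splitting of the tensor basis). Let $\mathcal S\cong\mathbb C\times\mathbb C\times\mathbb C^3$ be embedded in $\mathscr X_2$ by $(x,y,\lambda)\mapsto(v,w,C)=((0,0,x),(0,0,y),\operatorname{diag}(\lambda_1,\lambda_2,\lambda_3))$. For a group $G$ acting on a variety $X$, a subvariety $\mathcal S$ with normalizer $N=\{g: g\mathcal S\subseteq\mathcal S\}$ is a rational section if there is a dense open $\mathcal S_0\subseteq\mathcal S$ with $\overline{G\mathcal S}=X$ and such that every $g\in G$ with $g\mathcal S_0\cap\mathcal S_0\ne\emptyset$ lies in $N$. *)

From mathcomp Require Import all_boot all_algebra.
From mathcomp Require Import complex reals.
From mathcomp Require Import mpoly.
Set Implicit Arguments. Unset Strict Implicit. Unset Printing Implicit Defensive.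
Import GRing.Theory.
Local Open Scope ring_scope.

Section XStates.
Variable R : realType.
Local Notation C := (R[i]).

(* An L-state in coordinates (v, w, Cm) : C^3 x C^3 x M_3(C), with
   Cm b a = C_{ba} (row index b, column index a; index 3 of the paper is ordinal 2). *)
Definition Lstate := ('cV[C]_3 * 'cV[C]_3 * 'M[C]_3)%type.

Definition coords (x : Lstate) (i : 'I_15) : C :=
  let: (v, w, M) := x in
  if (i < 3)%N then v (inord i) 0
  else if (i < 6)%N then w (inord (i - 3)) 0
  else M (inord ((i - 6) %/ 3)) (inord ((i - 6) %% 3)).

Definition zclosed (Z : Lstate -> Prop) : Prop :=
  exists P : {mpoly C[15]} -> Prop,
    forall x, Z x <-> (forall p, P p -> p.@[coords x] = 0).

Definition zopen (U : Lstate -> Prop) : Prop := zclosed (fun x => ~ U x).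

Definition zcl (A : Lstate -> Prop) (x : Lstate) : Prop :=
  forall Z, zclosed Z -> (forall y, A y -> Z y) -> Z x.

Definition dense_open_in (S S0 : Lstate -> Prop) : Prop :=
  (exists U, zopen U /\ forall x, S0 x <-> (S x /\ U x)) /\
  (forall x, S x -> zcl S0 x).

Definition SO3 (g : 'M[C]_3) : Prop := g^T *m g = 1%:M /\ \det g = 1.

Definition Gelt := ('M[C]_3 * 'M[C]_3)%type.
Definition inG (g : Gelt) : Prop := SO3 g.1 /\ SO3 g.2.

Definition act (g : Gelt) (x : Lstate) : Lstate :=
  let: (v, w, M) := x in (g.1 *m v, g.2 *m w, g.2 *m M *m invmx g.1).

Definition Gorbits (A : Lstate -> Prop) (x : Lstate) : Prop :=
  exists g y, inG g /\ A y /\ x = act g y.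

Definition X0 (x : Lstate) : Prop :=
  let: (v, w, M) := x in
  [/\ v 0 0 = 0, v 1 0 = 0, w 0 0 = 0, w 1 0 = 0 &
      forall a b : 'I_3, (b == 2) != (a == 2) -> M b a = 0].

Definition X2 : Lstate -> Prop := zcl (Gorbits X0).

Definition S_emb (a b : C) (l : 'rV[C]_3) : Lstate :=
  (\col_(i < 3) (if i == 2 then a else 0),
   \col_(i < 3) (if i == 2 then b else 0),
   diag_mx l).

Definition Sset (x : Lstate) : Prop := exists a b l, x = S_emb a b l.

Definition normalizer (S : Lstate -> Prop) (g : Gelt) : Prop :=
  inG g /\ forall s, S s -> S (act g s).

Definition rational_section (X S : Lstate -> Prop) : Prop :=
  exists S0 : Lstate -> Prop,
    dense_open_in S S0 /\
    (forall x, zcl (Gorbits S) x <-> X x) /\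
    (forall g, inG g -> (exists s, S0 s /\ S0 (act g s)) -> normalizer S g).

End XStates.

(* Rotations about the third axis, written in their eigenbasis, act on the block
   [[a, b], [c, d]] of an X-state by rescaling its four eigenbasis entries; when these
   are nonzero, a rotation on each side diagonalises the block (a complex singular
   value decomposition), so a generic X-state lies in G.S and the closures of G.S and
   G.X0 agree.  On the open subset of S where x y <> 0 and the squares of the
   lambda_i are distinct, an element (g1, g2) of G sending a point of S into S fixes
   the third axis on both sides, and g2 diag(lambda) g1^T = diag(lambda') forces
   diag(lambda'^2) g2 = g2 diag(lambda^2) and likewise for g1; the distinctness makes
   g1 and g2 monomial with matching supports, so (g1, g2) preserves diagonal matrices.
   Zariski density is checked along lines: a polynomial vanishing at all but finitely
   many points of a line vanishes on all of it. *)

From mathcomp Require Import all_boot all_algebra.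
From mathcomp Require Import complex reals.
From mathcomp Require Import mpoly ring zify.
Set Implicit Arguments. Unset Strict Implicit. Unset Printing Implicit Defensive.
Import GRing.Theory Num.Theory.
Local Open Scope ring_scope.

Lemma meval_line (F : comRingType) n (p : {mpoly F[n]}) (c e : 'I_n -> F) :
  exists q : {poly F}, forall t, q.[t] = p.@[fun i => c i + t * e i].
Proof.
elim/mpolyind: p => [|a m p _ _ [q hq]]; first by exists 0 => t; rewrite meval0 horner0.
exists (a%:P * \prod_i ((c i)%:P + e i *: 'X) ^+ m i + q) => t.
rewrite mevalD mevalZ mevalX hornerD hornerM hornerC hq horner_prod.
congr (_ * _ + _); apply: eq_bigr => i _.
by rewrite horner_exp hornerD hornerC hornerZ hornerX mulrC.
Qed.

Lemma horner_eq0_poly (F : numDomainType) (q : {poly F}) :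
  (forall t, q.[t] = 0) -> q = 0.
Proof.
move=> q0; apply: (@roots_geq_poly_eq0 _ q [seq i%:R | i <- iota 0 (size q)]).
- by apply/allP => _ /mapP[i _ ->]; apply/rootP.
- by rewrite map_inj_uniq ?iota_uniq // => i j /eqP; rewrite eqr_nat => /eqP.
- by rewrite size_map size_iota.
Qed.

Lemma meval_eq0_line (F : numDomainType) n (p : {mpoly F[n]}) (c e : 'I_n -> F)
    (h : {poly F}) :
  h != 0 -> (forall t, h.[t] != 0 -> p.@[fun i => c i + t * e i] = 0) ->
  p.@[c] = 0.
Proof.
move=> h0 p0; have [q hq] := meval_line p c e.
have /eqP : q * h = 0.
  apply: horner_eq0_poly => t; rewrite hornerM.
  have [-> | ht] := eqVneq h.[t] 0; first by rewrite mulr0.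
  by rewrite hq p0 // mul0r.
rewrite mulf_eq0 (negbTE h0) orbF => /eqP q0.
have := hq 0; rewrite q0 horner0 => ->.
by apply: meval_eq => i; rewrite mul0r addr0.
Qed.

Section OrthogonalConjugation.
Variables (F : idomainType) (n : nat).
Implicit Types (g : 'M[F]_n) (l : 'rV[F]_n).

Lemma invmx_orthogonal g : g^T *m g = 1%:M -> invmx g = g^T.
Proof.
move=> o; have [gu _] := mulmx1_unit (mulmx1C o).
by rewrite -[invmx g]mulmx1 -(mulmx1C o) mulmxA mulVmx ?mul1mx.
Qed.

Lemma diag_mx_sqr l : diag_mx l *m diag_mx l = diag_mx (\row_i (l 0 i ^+ 2)).
Proof.
apply/matrixP => i j; rewrite mul_diag_mx !mxE.
by case: eqVneq; rewrite ?mulr0n ?mulr1n ?mulr0.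
Qed.

Lemma diag_intertwine_support g l l' i k :
  diag_mx l' *m g = g *m diag_mx l -> g i k != 0 -> l' 0 i = l 0 k.
Proof.
move=> /matrixP/(_ i k); rewrite mul_diag_mx mul_mx_diag !mxE => e gik0.
by apply: (mulIf gik0); rewrite e mulrC.
Qed.

Lemma orthogonal_diag_intertwine g1 g2 l l' :
  g1^T *m g1 = 1%:M -> g2^T *m g2 = 1%:M -> g2 *m diag_mx l *m g1^T = diag_mx l' ->
  diag_mx l' *m diag_mx l' *m g2 = g2 *m (diag_mx l *m diag_mx l).
Proof.
move=> o1 o2 e; rewrite -{2}(tr_diag_mx l') -e !trmx_mul !trmxK tr_diag_mx.
by rewrite !mulmxA -(mulmxA _ g1^T) o1 mulmx1 -(mulmxA _ g2^T) o2 mulmx1.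
Qed.

Lemma orthogonal_diag_conj g1 g2 l l' :
  g1^T *m g1 = 1%:M -> g2^T *m g2 = 1%:M ->
  (forall i j, i != j -> l' 0 i ^+ 2 != l' 0 j ^+ 2) ->
  g2 *m diag_mx l *m g1^T = diag_mx l' ->
  forall m, is_diag_mx (g2 *m diag_mx m *m g1^T).
Proof.
move=> o1 o2 l'inj e m; have e' : g1 *m diag_mx l *m g2^T = diag_mx l'.
  by rewrite -(tr_diag_mx l') -e !trmx_mul trmxK tr_diag_mx mulmxA.
have := orthogonal_diag_intertwine o1 o2 e; rewrite !diag_mx_sqr => sup2.
have := orthogonal_diag_intertwine o2 o1 e'; rewrite !diag_mx_sqr => sup1.
apply/is_diag_mxP => i j nij; rewrite mul_mx_diag mxE big1 // => k _.
rewrite !mxE; have [->|g2ik] := eqVneq (g2 i k) 0; first by rewrite !mul0r.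
have [->|g1jk] := eqVneq (g1 j k) 0; first by rewrite mulr0.
have := diag_intertwine_support sup2 g2ik; rewrite !mxE => ei.
have := diag_intertwine_support sup1 g1jk; rewrite !mxE => ej.
by have := l'inj i j nij; rewrite ei ej eqxx.
Qed.
End OrthogonalConjugation.

Ltac mx3_entries := apply/matrixP; case=> [[|[|[|//]]] ?]; case=> [[|[|[|//]]] ?];
  rewrite ?(mxE, big_ord_recl, big_ord0) /= ?(mulr0n, mulr1n);
  rewrite ?(mul0r, mulr0, add0r, addr0, mul1r, mulr1) //.

Section RotationsAboutTheThirdAxis.
Variable F : numClosedFieldType.
Implicit Types a b c d m z : F.

Definition matrix3 (rows : seq (seq F)) : 'M[F]_3 :=
  \matrix_(i < 3, j < 3) nth 0 (nth [::] rows i) j.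

Definition block3 a b c d m : 'M[F]_3 :=
  matrix3 [:: [:: a; b; 0]; [:: c; d; 0]; [:: 0; 0; m]].

Definition axis a : 'cV[F]_3 := \col_(i < 3) (if i == 2 then a else 0).

Lemma block3_axis a b c d a' : block3 a b c d 1 *m axis a' = axis a'.
Proof.
apply/matrixP => i j; rewrite (ord1 j) !mxE !big_ord_recl big_ord0 !mxE.
by case: i => [[|[|[|//]]] ?] /=; ring.
Qed.

Lemma axis_scale a b : axis (a * b) = a *: axis b.
Proof. by apply/matrixP => i j; rewrite !mxE; case: ifP; rewrite ?mulr0. Qed.

(* For [z = exp (i theta)] these are [cos theta] and [sin theta]. *)
Definition rotz_cos z := (z + z^-1) / 2.
Definition rotz_sin z := 'i * (z^-1 - z) / 2.

Definition rotz z : 'M[F]_3 := block3 (rotz_cos z) (- rotz_sin z) (rotz_sin z) (rotz_cos z) 1.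

Lemma rotz_orthogonal z : z != 0 -> (rotz z)^T *m rotz z = 1%:M.
Proof. by move=> z0; rewrite /rotz /rotz_cos /rotz_sin; mx3_entries; field: (sqrCi F). Qed.

Lemma rotzV z : z != 0 -> rotz z^-1 = (rotz z)^T.
Proof. by move=> z0; rewrite /rotz /rotz_cos /rotz_sin; mx3_entries; rewrite invrK; ring. Qed.

Lemma rotz_axis z a : rotz z *m axis a = axis a.
Proof. exact: block3_axis. Qed.

Definition eigbasis : 'M[F]_3 :=
  matrix3 [:: [:: 1; 1; 0]; [:: - 'i; 'i; 0]; [:: 0; 0; 1]].
Definition eigbasis_inv : 'M[F]_3 :=
  matrix3 [:: [:: 1 / 2; 'i / 2; 0]; [:: 1 / 2; - 'i / 2; 0]; [:: 0; 0; 1]].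
Definition torus z : 'M[F]_3 := diag_mx (\row_(i < 3) nth 0 [:: z; z^-1; 1] i).

Lemma eigbasisK : eigbasis *m eigbasis_inv = 1%:M.
Proof. by mx3_entries; field: (sqrCi F). Qed.

Lemma rotz_eigbasis z : z != 0 -> rotz z = eigbasis *m torus z *m eigbasis_inv.
Proof. by move=> z0; rewrite /rotz /rotz_cos /rotz_sin; mx3_entries; field: (sqrCi F). Qed.

Lemma det_rotz z : z != 0 -> \det (rotz z) = 1.
Proof.
move=> z0; rewrite rotz_eigbasis // !det_mulmx det_diag !big_ord_recl big_ord0 !mxE /=.
by rewrite mulrAC -det_mulmx eigbasisK det1; field.
Qed.

End RotationsAboutTheThirdAxis.

Section BlockDiagonalisation.
Variable F : numClosedFieldType.
Implicit Types a b c d m p q r s : F.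

Definition eig11 a b c d : F := (a + d + 'i * (c - b)) / 2.
Definition eig12 a b c d : F := (a - d + 'i * (c + b)) / 2.
Definition eig21 a b c d : F := (a - d - 'i * (c + b)) / 2.
Definition eig22 a b c d : F := (a + d - 'i * (c - b)) / 2.

Definition eig_disc a b c d : F := eig11 a b c d * eig12 a b c d * eig21 a b c d * eig22 a b c d.

Lemma block3_eigbasis a b c d m :
  block3 a b c d m = eigbasis F *m
    block3 (eig11 a b c d) (eig12 a b c d) (eig21 a b c d) (eig22 a b c d) m *m eigbasis_inv F.
Proof. by rewrite /eig11 /eig12 /eig21 /eig22; mx3_entries; field: (sqrCi F). Qed.

Lemma eigbasis_diag p q m :
  eigbasis_inv F *m diag_mx (\row_(i < 3) nth 0 [:: p + q; p - q; m] i) *m eigbasis F =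
  block3 p q q p m.
Proof. by mx3_entries; field: (sqrCi F). Qed.

Lemma torus_block3 (z1 z2 : F) a b c d m : z1 != 0 -> z2 != 0 ->
  torus z2 *m block3 a b c d m *m torus z1^-1 =
  block3 (z2 * a / z1) (z2 * b * z1) (c / (z2 * z1)) (d * z1 / z2) m.
Proof. by move=> z10 z20; mx3_entries; field; rewrite ?z10 ?z20. Qed.

(* P and Q are square roots of p s and q r; then z2 / z1 = p / P and z1 z2 = q / Q. *)
Lemma torus_symmetric_block p q r s m :
  p != 0 -> q != 0 -> r != 0 -> s != 0 ->
  exists z1 z2 P Q, [/\ z1 != 0, z2 != 0 &
    torus z2 *m block3 P Q Q P m *m torus z1^-1 = block3 p q r s m].
Proof.
move=> p0 q0 r0 s0; pose P := sqrtC (p * s); pose Q := sqrtC (q * r).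
have P0 : P != 0 by rewrite sqrtC_eq0 mulf_neq0.
have Q0 : Q != 0 by rewrite sqrtC_eq0 mulf_neq0.
pose z2 := sqrtC (p / P * (q / Q)).
have z20 : z2 != 0 by rewrite sqrtC_eq0 !mulf_neq0 ?invr_eq0.
have z10 : q / Q / z2 != 0 by rewrite !mulf_neq0 ?invr_eq0.
have [PP QQ zz] : [/\ P ^+ 2 = p * s, Q ^+ 2 = q * r & z2 ^+ 2 = p / P * (q / Q)].
  by split; apply: sqrtCK.
clearbody P Q z2; exists (q / Q / z2), z2, P, Q; split => //; rewrite torus_block3 //.
have nz := (P0, Q0, z20, p0, q0).
congr block3.
- have -> : z2 * P / (q / Q / z2) = z2 ^+ 2 * P * Q / q by field; rewrite ?nz.
  by rewrite zz; field; rewrite ?nz.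
- by field; rewrite ?nz.
- by rewrite -[r](mulKf q0) -QQ; field; rewrite ?nz.
- have -> : P * (q / Q / z2) / z2 = P * q / (z2 ^+ 2 * Q) by field; rewrite ?nz.
  by rewrite zz -[s](mulKf p0) -PP; field; rewrite ?nz.
Qed.

Lemma block3_rotz_diag a b c d m : eig_disc a b c d != 0 ->
  exists z1 z2 (l : 'rV[F]_3), [/\ z1 != 0, z2 != 0 &
    block3 a b c d m = rotz z2 *m diag_mx l *m rotz z1^-1].
Proof.
rewrite /eig_disc block3_eigbasis.
move: (eig11 a b c d) (eig12 a b c d) (eig21 a b c d) (eig22 a b c d) => p q r s.
rewrite !mulf_eq0 !negb_or => /andP[/andP[/andP[p0 q0] r0] s0].
have [z1 [z2 [P [Q [z10 z20 e]]]]] := torus_symmetric_block m p0 q0 r0 s0.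
exists z1, z2, (\row_(i < 3) nth 0 [:: P + Q; P - Q; m] i); split => //.
by rewrite -e -eigbasis_diag !rotz_eigbasis ?invr_eq0 // !mulmxA.
Qed.

End BlockDiagonalisation.

Section LStates.
Variable R : realType.
Local Notation C := R[i].
Local Notation Lstate := (Lstate R).
Implicit Types (x d : Lstate) (A B : Lstate -> Prop) (g : Gelt R).

Lemma Lstate_line (v w v' w' : 'cV[C]_3) (M M' : 'M[C]_3) t :
  ((v, w, M) : Lstate) + t *: (v', w', M') = (v + t *: v', w + t *: w', M + t *: M').
Proof. by []. Qed.

Lemma coords_line x d t i : coords (x + t *: d) i = coords x i + t * coords d i.
Proof.
case: x d => [[v w] M] [[v' w'] M'] /=.
by case: ifP => _; [|case: ifP => _]; rewrite !mxE.
Qed.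

Lemma mem_zcl A x : A x -> zcl A x.
Proof. by move=> Ax Z _; apply. Qed.

Lemma zcl_trans A B x : (forall y, B y -> zcl A y) -> zcl B x -> zcl A x.
Proof. by move=> BA Bx Z Zc AZ; apply: Bx => // y /BA; apply. Qed.

Lemma zcl_line A x d (rs : seq C) :
  (forall t, \prod_(r <- rs) (t - r) != 0 -> A (x + t *: d)) -> zcl A x.
Proof.
move=> Aline Z [P ZP] AZ; apply/ZP => p Pp.
pose h := \prod_(r <- rs) ('X - r%:P).
have hE t : h.[t] = \prod_(r <- rs) (t - r).
  by rewrite horner_prod; apply: eq_bigr => r _; rewrite hornerXsubC.
have h0 : h != 0 by apply/monic_neq0/monic_prod_XsubC.
apply: (@meval_eq0_line _ _ p (coords x) (coords d) h h0) => t ht.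
by rewrite -(meval_eq _ (coords_line x d t)); apply: (ZP _).1 Pp; apply/AZ/Aline; rewrite -hE.
Qed.

Lemma zopen_meval_neq0 (p : {mpoly C[15]}) : zopen (fun x : Lstate => p.@[coords x] != 0).
Proof.
exists (eq p) => x; split; first by move=> /negP; rewrite negbK => /eqP px _ <-.
by move=> /(_ p erefl) ->; rewrite eqxx.
Qed.

Definition Gmul g h : Gelt R := (g.1 *m h.1, g.2 *m h.2).

Lemma SO3_invmx (o : 'M[C]_3) : SO3 o -> invmx o = o^T.
Proof. by case=> /invmx_orthogonal. Qed.

Lemma SO3M (o o' : 'M[C]_3) : SO3 o -> SO3 o' -> SO3 (o *m o').
Proof.
move=> [oo d1] [oo' d1']; split; last by rewrite det_mulmx d1 d1' mulr1.
by rewrite trmx_mul mulmxA -(mulmxA o'^T) oo mulmx1 oo'.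
Qed.

Lemma inG_mul g h : inG g -> inG h -> inG (Gmul g h).
Proof. by move=> [g1 g2] [h1 h2]; split; apply: SO3M. Qed.

Lemma act_mul g h x : inG g -> inG h -> act g (act h x) = act (Gmul g h) x.
Proof.
case: x g h => [[v w] M] [g1 g2] [h1 h2] [/= sg1 sg2] [/= sh1 sh2].
have sgh1 := SO3M sg1 sh1.
by rewrite /act /= !SO3_invmx // trmx_mul !mulmxA.
Qed.

Lemma act_line g x d t : act g (x + t *: d) = act g x + t *: act g d.
Proof.
case: x d => [[v w] M] [[v' w'] M'].
by congr (_, _, _); rewrite /= ?mulmxDr ?mulmxDl -?scalemxAr -?scalemxAl.
Qed.

Lemma Gorbits_act A g x : inG g -> Gorbits A x -> Gorbits A (act g x).
Proof.
move=> Gg [h [y [Gh [Ay ->]]]].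
by exists (Gmul g h), y; rewrite act_mul //; split => //; apply: inG_mul.
Qed.

Lemma rotz_SO3 (z : C) : z != 0 -> SO3 (rotz z).
Proof. by move=> z0; split; [apply: rotz_orthogonal | apply: det_rotz]. Qed.

Lemma ord3_cases (i : 'I_3) : [\/ i = 0, i = 1 | i = 2].
Proof. by case: i => [[|[|[|//]]] ?]; [constructor 1|constructor 2|constructor 3]; apply: val_inj. Qed.

Lemma S_embE (a b : C) l : S_emb a b l = (axis a, axis b, diag_mx l).
Proof. by []. Qed.

Lemma Sset_X0 x : Sset x -> X0 x.
Proof.
move=> [a [b [l ->]]]; split; rewrite ?mxE // => i j ij; rewrite mxE.
by case: (eqVneq j i) ij => [->|_ _]; rewrite ?eqxx ?mulr0n.
Qed.

Lemma X0_block (v w : 'cV[C]_3) M : X0 (v, w, M) ->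
  [/\ v = axis (v 2 0), w = axis (w 2 0) &
      M = block3 (M 0 0) (M 0 1) (M 1 0) (M 1 1) (M 2 2)].
Proof.
move=> [v0 v1 w0 w1 M0]; split; apply/matrixP => i j; rewrite !mxE ?(ord1 j).
- by case: (ord3_cases i) => ->.
- by case: (ord3_cases i) => ->.
- by case: (ord3_cases i) => ->; case: (ord3_cases j) => -> //=; apply: M0.
Qed.

Lemma X0_Gorbits_S (v w : 'cV[C]_3) M : X0 (v, w, M) ->
  eig_disc (M 0 0) (M 0 1) (M 1 0) (M 1 1) != 0 -> Gorbits (@Sset R) (v, w, M).
Proof.
move=> /X0_block[ev ew eM] /(block3_rotz_diag (M 2 2))[z1 [z2 [l [z10 z20 e]]]].
have [o1 o2] := (rotz_SO3 z10, rotz_SO3 z20).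
exists (rotz z1, rotz z2), (S_emb (v 2 0) (w 2 0) l); split=> //; split.
  by exists (v 2 0), (w 2 0), l.
by rewrite /act /= !rotz_axis SO3_invmx // -rotzV // -e -ev -ew -eM.
Qed.

Lemma X2_zcl_GS x : X2 x -> zcl (Gorbits (@Sset R)) x.
Proof.
apply: zcl_trans => _ [g [[[v w] M] [Gg [X0M ->]]]].
set a := M 0 0; set b := M 0 1; set c := M 1 0; set d := M 1 1.
(* Moving [a] by [2 t] moves each of the four eigenbasis entries by [t]. *)
pose rs := [:: - eig11 a b c d; - eig12 a b c d; - eig21 a b c d; - eig22 a b c d].
apply: (zcl_line (d := act g (0, 0, 2%:R *: delta_mx 0 0)) (rs := rs)) => t ht.
rewrite -act_line; apply: Gorbits_act Gg _.
have -> : (v, w, M) + t *: (0, 0, 2%:R *: delta_mx 0 0) = (v, w, M + (2 * t) *: delta_mx 0 0).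
  by rewrite Lstate_line !scaler0 !addr0 scalerA mulrC.
have [v0 v1 w0 w1 M0] := X0M.
apply: X0_Gorbits_S.
  split=> // i j ij; rewrite !mxE M0 // add0r.
  by case: (eqVneq j 0) ij => [->|]; case: (eqVneq i 0) => [->|] //; rewrite mulr0.
move: ht; rewrite !mxE /= !mulr0 !mulr1 !addr0 -/a -/b -/c -/d.
by congr (_ != _); rewrite !big_cons big_nil /eig_disc /eig11 /eig12 /eig21 /eig22; field.
Qed.

Lemma zcl_GS_X2 x : zcl (Gorbits (@Sset R)) x -> X2 x.
Proof.
apply: zcl_trans => _ [g [s [Gg [Ss ->]]]].
by apply: mem_zcl; exists g, s; split; [|split; [apply: Sset_X0|]].
Qed.

Definition Xv (i : 'I_3) : {mpoly C[15]} := 'X_(inord i).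
Definition Xw (i : 'I_3) : {mpoly C[15]} := 'X_(inord (3 + i)).
Definition XC (b a : 'I_3) : {mpoly C[15]} := 'X_(inord (6 + 3 * b + a)).

Lemma meval_Xv (v w : 'cV[C]_3) M i : (Xv i).@[coords (v, w, M)] = v i 0.
Proof. by rewrite mevalXU /coords inordK ?ltn_ord ?inord_val // (ltn_trans (ltn_ord i)). Qed.

Lemma meval_Xw (v w : 'cV[C]_3) M i : (Xw i).@[coords (v, w, M)] = w i 0.
Proof.
have i3 := ltn_ord i; rewrite mevalXU /coords inordK /=; last lia.
by rewrite ifT ?addKn ?inord_val //; lia.
Qed.

Lemma meval_XC (v w : 'cV[C]_3) M b a : (XC b a).@[coords (v, w, M)] = M b a.
Proof.
have [a3 b3] := (ltn_ord a, ltn_ord b).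
rewrite mevalXU /coords inordK /=; last lia.
have -> : ((6 + 3 * b + a - 6) %/ 3 = b)%N by lia.
have -> : ((6 + 3 * b + a - 6) %% 3 = a)%N by lia.
by rewrite !inord_val.
Qed.

Definition generic_poly : {mpoly C[15]} :=
  Xv 2 * Xw 2 * (XC 0 0 ^+ 2 - XC 1 1 ^+ 2) * (XC 0 0 ^+ 2 - XC 2 2 ^+ 2) *
  (XC 1 1 ^+ 2 - XC 2 2 ^+ 2).

Definition sq_disc (l : 'rV[C]_3) : C :=
  (l 0 0 ^+ 2 - l 0 1 ^+ 2) * (l 0 0 ^+ 2 - l 0 2 ^+ 2) * (l 0 1 ^+ 2 - l 0 2 ^+ 2).

Definition S0 x : Prop := Sset x /\ generic_poly.@[coords x] != 0.

Lemma meval_generic_poly (a b : C) l :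
  generic_poly.@[coords (S_emb a b l)] = a * b * sq_disc l.
Proof.
rewrite S_embE /generic_poly !(mevalM, mevalB, rmorphXn) meval_Xv meval_Xw !meval_XC.
by rewrite !mxE /= !mulr1n !mulrA.
Qed.

Lemma sq_disc_neq0 l : sq_disc l != 0 -> forall i j, i != j -> l 0 i ^+ 2 != l 0 j ^+ 2.
Proof.
rewrite /sq_disc !mulf_eq0 !negb_or !subr_eq0 => /andP[/andP[l01 l02] l12] i j.
by case: (ord3_cases i) => ->; case: (ord3_cases j) => -> //= _; rewrite // eq_sym.
Qed.

Lemma S_emb_line (a b a' b' t : C) l l' :
  S_emb a b l + t *: S_emb a' b' l' = S_emb (a + t * a') (b + t * b') (l + t *: l').
Proof.
rewrite !S_embE Lstate_line; congr (_, _, _); apply/matrixP => i j; rewrite !mxE.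
- by case: ifP; rewrite ?mulr0 ?addr0.
- by case: ifP; rewrite ?mulr0 ?addr0.
- by case: eqP; rewrite ?mulr1n ?mulr0n ?mulr0 ?addr0.
Qed.

Lemma S0_dense_open : dense_open_in (@Sset R) S0.
Proof.
split; first by exists (fun x => generic_poly.@[coords x] != 0); split => //; apply: zopen_meval_neq0.
move=> _ [a [b [l ->]]].
set l0 := l 0 0; set l1 := l 0 1; set l2 := l 0 2.
pose rs := [:: - a; - b; l0 - l1; - (l0 + l1); (l0 - l2) / 2; - (l0 + l2) / 2;
               l1 - l2; - (l1 + l2) / 3].
apply: (zcl_line (d := S_emb 1 1 (\row_(i < 3) nth 0 [:: 0; 1; 2] i)) (rs := rs)) => t ht.
rewrite S_emb_line !mulr1; split; first by eexists; eexists; eexists.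
rewrite meval_generic_poly.
have -> : (a + t) * (b + t) * sq_disc (l + t *: \row_(i < 3) nth 0 [:: 0; 1; 2] i) =
          - 12%:R * \prod_(r <- rs) (t - r).
  by rewrite /sq_disc !mxE /= !big_cons big_nil -/l0 -/l1 -/l2; field.
by rewrite mulf_neq0 // oppr_eq0 pnatr_eq0.
Qed.

Lemma axis_mulmx (o : 'M[C]_3) (a a' : C) : a != 0 -> o *m axis a = axis a' ->
  forall b, o *m axis b = axis (b / a * a').
Proof. by move=> a0 e b; rewrite -{1}[b](divfK a0) !axis_scale -scalemxAr e. Qed.

Lemma normalizer_S g (a b a' b' : C) l l' :
  inG g -> a != 0 -> b != 0 -> sq_disc l' != 0 ->
  act g (S_emb a b l) = S_emb a' b' l' -> normalizer (@Sset R) g.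
Proof.
case: g => g1 g2 [s1 s2] a0 b0 /sq_disc_neq0 l'inj; have [[o1 _] [o2 _]] := (s1, s2).
rewrite !S_embE /act /= SO3_invmx //; case=> ea eb el.
split=> [|_ [a2 [b2 [l2 ->]]]]; first by split.
have /diag_mxP[d ed] := orthogonal_diag_conj o1 o2 l'inj el l2.
exists (a2 / a * a'), (b2 / b * b'), d.
by rewrite S_embE /act /= SO3_invmx // (axis_mulmx a0 ea) (axis_mulmx b0 eb) ed.
Qed.

Lemma S0_normalizer g : inG g -> (exists s, S0 s /\ S0 (act g s)) -> normalizer (@Sset R) g.
Proof.
move=> Gg [_ [[[a [b [l ->]]] gen] [[a' [b' [l' e]]] gen']]].
rewrite e meval_generic_poly in gen'; rewrite meval_generic_poly in gen.
have a0 : a != 0 by apply: contraNneq gen => ->; rewrite !mul0r.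
have b0 : b != 0 by apply: contraNneq gen => ->; rewrite mulr0 mul0r.
have l'0 : sq_disc l' != 0 by apply: contraNneq gen' => ->; rewrite mulr0.
exact: normalizer_S Gg a0 b0 l'0 e.
Qed.

End LStates.

Theorem propositionB2 (R : realType) : rational_section (@X2 R) (@Sset R).
Proof.
exists (@S0 R); split; first exact: S0_dense_open.
split; last exact: S0_normalizer.
by move=> x; split; [apply: zcl_GS_X2 | apply: X2_zcl_GS].
Qed.
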